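(* Let $m\ge 2$ and let $\mathcal{A}=\{\mathbf{A}^{(1)},\ldots,\mathbf{A}^{(m)}\}$ be POVMs on $\mathbb{C}^d$. Define $t_{\mathrm{PI}}=\max_{1\le l<l'\le m}\max\{t\in[0,1]:\{\Phi_t(\mathbf{A}^{(l)}),\Phi_t(\mathbf{A}^{(l')})\}\text{ is jointly measurable}\}$ and $t_{(m-1)\text{-POVM}}=\max\{t\in[0,1]:\Phi_t(\mathcal{A})\text{ is }\mathcal{B}\text{-simulable for some set }\mathcal{B}\text{ of at most }m-1\text{ POVMs on }\mathbb{C}^d\}$. Then $t_{\mathrm{PI}}\le t_{(m-1)\text{-POVM}}$.
   Context: A POVM on $\mathbb{C}^d$ with $n$ outcomes is a tuple $\mathbf{A}=(A_1,\ldots,A_n)$ of positive semidefinite operators with $\sum_a A_a=\mathbb{I}$. Given a set $\mathcal{B}=\{\mathbf{B}^{(j)}\}_j$ of POVMs, a POVM $\mathbf{A}$ with $n$ outcomes is $\mathcal{B}$-simulable if there are a probability distribution $p(j)$ over elements of $\mathcal{B}$ and conditional probability distributions $q(i|j,i')$ such that $A_i=\sum_j p(j)\sum_{i'}q(i|j,i')B^{(j)}_{i'}$ for all $i$; a set of POVMs is $\mathcal{B}$-simulable if each element is (distributions may depend on the element). The depolarising map is $\Phi_t(A)=tA+(1-t)\mathrm{Tr}(A)\mathbb{I}/d$, applied effectwise to POVMs and elementwise to sets. A pair $\{\mathbf{A},\mathbf{A}'\}$ is jointly measurable if there is a POVM $(M_{ab})$ with $\sum_b M_{ab}=A_a$,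 $\sum_a M_{ab}=A'_b$. *)

(* Scalars: an arbitrary numClosedFieldType C (e.g. algC),
   playing the role of the complex numbers; conjugation is conjC. *)
From HB Require Import structures.
From mathcomp Require Import all_boot all_order all_algebra.
From mathcomp Require Import sesquilinear spectral.
Set Implicit Arguments. Unset Strict Implicit. Unset Printing Implicit Defensive.
Import Order.TTheory GRing.Theory Num.Theory.
Local Open Scope ring_scope.
Local Open Scope sesquilinear_scope.

Section Defs.
Variable C : numClosedFieldType.
Variable d : nat.

Definition psd (A : 'M[C]_d) : Prop :=
  A ^t* = A /\ forall v : 'rV[C]_d, 0 <= (v *m A *m v ^t*) 0 0.

Definition is_povm (n : nat) (A : 'I_n -> 'M[C]_d) : Prop :=
  (forall a, psd (A a)) /\ \sum_(a < n) A a = 1%:M.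

Definition depol (t : C) (X : 'M[C]_d) : 'M[C]_d :=
  t *: X + ((1 - t) * \tr X / d%:R) *: 1%:M.

Definition depol_povm (t : C) (n : nat) (A : 'I_n -> 'M[C]_d) : 'I_n -> 'M[C]_d :=
  fun a => depol t (A a).

Definition jointly_measurable (n1 n2 : nat)
    (A : 'I_n1 -> 'M[C]_d) (A' : 'I_n2 -> 'M[C]_d) : Prop :=
  exists M : 'I_n1 -> 'I_n2 -> 'M[C]_d,
    (forall a b, psd (M a b)) /\
    (forall a, \sum_(b < n2) M a b = A a) /\
    (forall b, \sum_(a < n1) M a b = A' b).

Definition simulable (k : nat) (nb : 'I_k -> nat)
    (B : forall j : 'I_k, 'I_(nb j) -> 'M[C]_d)
    (n : nat) (A : 'I_n -> 'M[C]_d) : Prop :=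
  exists (p : 'I_k -> C) (q : forall j : 'I_k, 'I_n -> 'I_(nb j) -> C),
    (forall j, 0 <= p j) /\ \sum_(j < k) p j = 1 /\
    (forall j i i', 0 <= q j i i') /\
    (forall j i', \sum_(i < n) q j i i' = 1) /\
    (forall i, A i = \sum_(j < k) p j *: \sum_(i' < nb j) q j i i' *: B j i').

End Defs.

(* Take t' = t.  A joint measurement N of the depolarised pair (l, l') is a
   single POVM on pairs of outcomes of which both Phi_t(A^(l)) and
   Phi_t(A^(l')) are coarse-grainings, and each of the other m - 2 POVMs
   Phi_t(A^(l'')) simulates itself, so m - 1 POVMs suffice.  To index them
   uniformly by 'I_(m-1), each Phi_t(A^(l'')) is also turned into a POVM on
   pairs, with a deterministic first component. *)
From HB Require Import structures.
From mathcomp Require Import all_boot all_order all_algebra.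
From mathcomp Require Import sesquilinear spectral.
Import Order.TTheory GRing.Theory Num.Theory.
Set Implicit Arguments. Unset Strict Implicit. Unset Printing Implicit Defensive.
Local Open Scope ring_scope.
Local Open Scope sesquilinear_scope.

Lemma sum_indicator (R : pzSemiRingType) (T : finType) (a : T) :
  \sum_(i : T) ((i == a)%:R : R) = 1.
Proof. by rewrite (bigD1 a) //= eqxx big1 ?addr0 // => i /negbTE ->. Qed.

Lemma sum_delta (R : pzSemiRingType) (V : lSemiModType R) (T : finType)
    (a : T) (F : T -> V) :
  \sum_(i : T) ((i == a)%:R *: F i) = F a.
Proof.
by rewrite (bigD1 a) //= eqxx scale1r big1 ?addr0 // => i /negbTE ->; rewrite scale0r.
Qed.

Lemma big_enum_val_pair (R : nmodType) (T1 T2 : finType) (F : T1 -> T2 -> R) :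
  \sum_(x < #|{: T1 * T2}|) F (enum_val x).1 (enum_val x).2 =
  \sum_(a : T1) \sum_(b : T2) F a b.
Proof. by rewrite pair_big (big_enum_val (A := {: T1 * T2}) (fun p => F p.1 p.2)). Qed.

Section Povm.
Variables (C : numClosedFieldType) (d : nat).
Implicit Types (X Y : 'M[C]_d) (c t : C).

Lemma psd0 : psd (0 : 'M[C]_d).
Proof.
by split=> [|v]; [rewrite linear0 map_mx0 | rewrite mulmx0 mul0mx mxE].
Qed.

Lemma psdZ c X : 0 <= c -> psd X -> psd (c *: X).
Proof.
move=> c_ge0 [hX pX]; split=> [|v].
  by rewrite linearZ /= map_mxZ hX [in LHS]/= geC0_conj.
by rewrite -scalemxAr -scalemxAl mxE mulr_ge0.
Qed.

Lemma psdD X Y : psd X -> psd Y -> psd (X + Y).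
Proof.
move=> [hX pX] [hY pY]; split=> [|v]; first by rewrite linearD /= map_mxD hX hY.
by rewrite mulmxDr mulmxDl mxE addr_ge0.
Qed.

Lemma psd1 : psd (1%:M : 'M[C]_d).
Proof.
split=> [|v]; first by rewrite trmx1 map_mx1.
rewrite mulmx1 mxE; apply: sumr_ge0 => k _.
by rewrite !mxE -normCK exprn_ge0.
Qed.

(* The diagonal entry X i i is the quadratic form of X at the i-th unit vector. *)
Lemma psd_mxtrace_ge0 X : psd X -> 0 <= \tr X.
Proof.
move=> [_ pX]; apply: sumr_ge0 => i _.
have := pX (delta_mx 0 i).
rewrite -rowE mxE (bigD1 i) //= big1 ?addr0; last first.
  by move=> k /negbTE ki; rewrite !mxE ki andbF conjC0 mulr0.
by rewrite !mxE !eqxx conjC1 mulr1.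
Qed.

Lemma psd_depol t X : 0 <= t <= 1 -> psd X -> psd (depol t X).
Proof.
move=> /andP[t_ge0 t_le1] pX; apply: psdD; first exact: psdZ.
apply: psdZ psd1.
by rewrite mulr_ge0 ?invr_ge0 ?ler0n // mulr_ge0 ?subr_ge0 // psd_mxtrace_ge0.
Qed.

Lemma is_povm_depol t n (A : 'I_n -> 'M[C]_d) : (0 < d)%N -> 0 <= t <= 1 ->
  is_povm A -> is_povm (depol_povm t A).
Proof.
move=> d_gt0 t01 [pA sA]; split=> [a|]; first exact: psd_depol.
rewrite /depol_povm /depol big_split /= -scaler_sumr sA -scaler_suml.
rewrite -mulr_suml -mulr_sumr -raddf_sum /= sA mxtrace1.
by rewrite -mulrA mulfV ?pnatr_eq0 -?lt0n // mulr1 -scalerDl addrC subrK scale1r.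
Qed.

Lemma povm_size_gt0 n (A : 'I_n -> 'M[C]_d) : (0 < d)%N -> is_povm A -> (0 < n)%N.
Proof.
move=> d_gt0 [_ sA]; case: n A sA => // A.
move/matrixP/(_ (Ordinal d_gt0) (Ordinal d_gt0)).
by rewrite big_ord0 !mxE eqxx => /eqP; rewrite eq_sym oner_eq0.
Qed.

End Povm.

Section Simulation.
Variables (C : numClosedFieldType) (d : nat).

Definition flatten_joint n1 n2 (N : 'I_n1 -> 'I_n2 -> 'M[C]_d) :
    'I_#|{: 'I_n1 * 'I_n2}| -> 'M[C]_d :=
  fun x => N (enum_val x).1 (enum_val x).2.

Lemma is_povm_flatten_joint n1 n2 (N : 'I_n1 -> 'I_n2 -> 'M[C]_d) A' :
    (forall a b, psd (N a b)) -> (forall b, \sum_a N a b = A' b) -> is_povm A' ->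
  is_povm (flatten_joint N).
Proof.
move=> pN sN [_ sA']; split=> [x|]; first exact: pN.
by rewrite big_enum_val_pair exchange_big /=; under eq_bigr do rewrite sN.
Qed.

Lemma joint_with_snd n1 n2 (A' : 'I_n2 -> 'M[C]_d) :
    (0 < n1)%N -> (forall b, psd (A' b)) ->
  exists N : 'I_n1 -> 'I_n2 -> 'M[C]_d,
    (forall a b, psd (N a b)) /\ forall b, \sum_a N a b = A' b.
Proof.
move=> n1_gt0 pA'; exists (fun a b => (a == Ordinal n1_gt0)%:R *: A' b).
by split=> [a b|b]; [apply: psdZ; rewrite ?ler0n | rewrite sum_delta].
Qed.

Section Relabel.
Local Unset Implicit Arguments.
Variables (k : nat) (nb : 'I_k -> nat) (B : forall j : 'I_k, 'I_(nb j) -> 'M[C]_d).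

Lemma simulable_relabel (j1 : 'I_k) n (A : 'I_n -> 'M[C]_d)
    (f : forall j : 'I_k, 'I_(nb j) -> 'I_n) :
  (forall i, A i = \sum_i' (f j1 i' == i)%:R *: B j1 i') -> simulable B A.
Proof.
move=> hA; exists (fun j => (j == j1)%:R), (fun j i i' => (f j i' == i)%:R).
split=> [j|]; first exact: ler0n.
split; first exact: sum_indicator.
split=> [j i i'|]; first exact: ler0n.
split=> [j i'|i]; first by under eq_bigr do rewrite eq_sym; exact: sum_indicator.
by rewrite sum_delta.
Qed.

End Relabel.
Arguments simulable_relabel {k nb B} j1 {n A} f.

Section JointMarginals.
Variables (k n1 : nat) (n2 : 'I_k -> nat).
Local Unset Implicit Arguments.
Variable N : forall j : 'I_k, 'I_n1 -> 'I_(n2 j) -> 'M[C]_d.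

Lemma simulable_joint_fst (j1 : 'I_k) (A : 'I_n1 -> 'M[C]_d) :
  (forall a, \sum_b N j1 a b = A a) -> simulable (fun j => flatten_joint (N j)) A.
Proof.
move=> sN; apply: (simulable_relabel j1 (fun j x => (enum_val x).1)) => a.
rewrite -sN (big_enum_val_pair (fun a' b => (a' == a)%:R *: N j1 a' b)).
by under [RHS]eq_bigr do rewrite -scaler_sumr; rewrite sum_delta.
Qed.

Lemma simulable_joint_snd (j1 : 'I_k) (A : 'I_(n2 j1) -> 'M[C]_d) :
    (0 < n2 j1)%N -> (forall b, \sum_a N j1 a b = A b) ->
  simulable (fun j => flatten_joint (N j)) A.
Proof.
move=> n2_gt0 sN.
pose cast (b' : nat) : 'I_(n2 j1) := insubd (Ordinal n2_gt0) b'.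
pose f j (x : 'I_#|{: 'I_n1 * 'I_(n2 j)}|) := cast (enum_val x).2.
apply: (simulable_relabel j1 f) => b.
rewrite -sN.
rewrite (big_enum_val_pair (fun a (b' : 'I_(n2 j1)) => (cast b' == b)%:R *: N j1 a b')).
have castK (b' : 'I_(n2 j1)) : cast b' = b' := valKd _ b'.
by rewrite exchange_big; under [RHS]eq_bigr do rewrite castK -scaler_sumr; rewrite sum_delta.
Qed.

End JointMarginals.
End Simulation.

Theorem mainTheorem11 (C : numClosedFieldType) (d m : nat)
    (hd : (0 < d)%N) (hm : (2 <= m)%N)
    (n : 'I_m -> nat) (A : forall l : 'I_m, 'I_(n l) -> 'M[C]_d)
    (hA : forall l, is_povm (A l)) :
  forall (t : C) (l l' : 'I_m),
    0 <= t <= 1 -> (l < l')%N ->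
    jointly_measurable (depol_povm t (A l)) (depol_povm t (A l')) ->
  exists t' : C,
    [/\ t <= t', 0 <= t' <= 1 &
      exists (k : nat) (nb : 'I_k -> nat)
             (B : forall j : 'I_k, 'I_(nb j) -> 'M[C]_d),
        (k <= m - 1)%N /\ (forall j, is_povm (B j)) /\
        (forall l0 : 'I_m, simulable B (depol_povm t' (A l0)))].
Proof.
move=> t l l' t01 ll'.
have [j0 ->] : exists j0, l' = lift l j0.
  by case: (unliftP l l') => [j ->|E]; [exists j | move: ll'; rewrite E ltnn].
move=> [M [pM [sM1 sM2]]].
have n_gt0 l0 : (0 < n l0)%N := povm_size_gt0 hd (hA l0).
have povm_Phi l0 : is_povm (depol_povm t (A l0)) := is_povm_depol hd t01 (hA l0).
have joint_j j : exists Nj : 'I_(n l) -> 'I_(n (lift l j)) -> 'M[C]_d,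
    [/\ forall a b, psd (Nj a b),
      forall b, \sum_a Nj a b = depol_povm t (A (lift l j)) b
      & j = j0 -> forall a, \sum_b Nj a b = depol_povm t (A l) a].
  case: (eqVneq j j0) => [->|ne]; first by exists M.
  have [Nj [pNj sNj]] := joint_with_snd (n_gt0 l) (povm_Phi (lift l j)).1.
  by exists Nj; split=> // E; rewrite E eqxx in ne.
have [N HN] := fin_all_exists joint_j.
exists t; split=> //; exists m.-1, _, (fun j => flatten_joint (N j)).
split; first by rewrite subn1.
split=> [j|l0].
  by have [pN sN _] := HN j; exact: is_povm_flatten_joint pN sN _.
case: (unliftP l l0) => [j ->|->].
  by have [_ sN _] := HN j; exact: simulable_joint_snd (n_gt0 _) sN.
by have [_ _ sN] := HN j0; exact: simulable_joint_fst (sN erefl).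
Qed.
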